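(* Let $G$ be a graph with edge weights $w(e)\ge 1$, let $\alpha>1$ and $r\in[0,1)$, and let levels, rounded weights $w_r$, level matchings $M_l$, the combined matching $\hat{M}$ and the sets $\mathcal{R}(e)$ be as defined below. Then for every $e\in\hat{M}$, $$\Phi(e)\le\frac{\alpha+1}{\alpha-1}\,w_r(e),$$ where $\Phi(e)=\sum_{e'\in\mathcal{R}(e)}w_r(e')$.
   Context: An edge $e$ is assigned to level $l\in\mathbb{Z}$ if $w(e)\in[\alpha^{l+r},\alpha^{l+r+1})$, and its rounded weight is $w_r(e)=\alpha^{l+r}$. For each level $l$, $M_l$ is a matching consisting of edges of level $l$. The combined matching $\hat{M}$ is produced by the greedy process: start with $\hat{M}=\emptyset$; for $l$ from the maximum level down to the minimum level, add all (remaining) edges of $M_l$ to $\hat{M}$, and for each $(u,v)\in M_l$ remove all edges incident to $u$ or $v$ from every $M_{l'}$ with $l'<l$. For $e=(u,v)\in\hat{M}$ lying on level $l$, $\mathcal{R}(e)=\{e\}\cup\{(x,y)\in M_{l'}: l'<l,\ \{x,y\}\cap\{u,v\}\neq\emptyset\}$ (here $M_{l'}$ refers to the level matchings before removals). *)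

From HB Require Import structures.
From mathcomp Require Import all_boot all_order all_algebra.
From mathcomp Require Import reals exp.
Set Implicit Arguments. Unset Strict Implicit. Unset Printing Implicit Defensive.
Import Order.TTheory GRing.Theory Num.Theory.
Local Open Scope ring_scope.

(* A graph on a finite vertex type V: edges are 2-element vertex sets.        *)
Definition share (V : finType) (e f : {set V}) : bool := ~~ [disjoint e & f].

Definition is_matching (V : finType) (M : {set {set V}}) : Prop :=
  forall e f, e \in M -> f \in M -> e != f -> [disjoint e & f].

Definition wround (R : realType) (V : finType) (alpha r : R)
  (lev : {set V} -> int) (e : {set V}) : R :=
  powR alpha ((lev e)%:~R + r).

Definition greedy_step (V : finType) (M : int -> {set {set V}})
  (S : {set {set V}}) (l : int) : {set {set V}} :=
  S :|: [set e in M l | [forall f in S, ~~ share e f]].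

(* The combined matching hat M: process levels from the maximum down to the
   minimum (only levels of edges of the graph can carry non-empty M_l). *)
Definition Mhat (V : finType) (Eset : {set {set V}}) (lev : {set V} -> int)
  (M : int -> {set {set V}}) : {set {set V}} :=
  foldl (greedy_step M) set0
    (sort (fun a b : int => b <= a) (undup [seq lev e | e <- enum Eset])).

(* R(e) = {e} u {f in M_{l'} : l' < lev e, f shares an endpoint with e}.
   (Edges of M_{l'} have level l', so f \in M_{l'} with l' < lev e is
   written as f \in M (lev f) with lev f < lev e.) *)
Definition Rset (V : finType) (lev : {set V} -> int)
  (M : int -> {set {set V}}) (e : {set V}) : {set {set V}} :=
  [set f | (f == e) || [&& lev f < lev e, f \in M (lev f) & share e f]].

Definition Phi (R : realType) (V : finType) (alpha r : R)
  (lev : {set V} -> int) (M : int -> {set {set V}}) (e : {set V}) : R :=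
  \sum_(f in Rset lev M e) wround alpha r lev f.

(* R(e) consists of e and of lower-level edges touching one of the two
   endpoints of e. Each M_l is a matching, so an endpoint meets at most one
   edge per level, and an edge k levels below e has rounded weight
   alpha^-k * w_r(e). Hence Phi(e) <= w_r(e) * (1 + 2 * sum_(k >= 1) alpha^-k)
   = (alpha + 1) / (alpha - 1) * w_r(e). *)

From HB Require Import structures.
From mathcomp Require Import all_boot all_order all_algebra.
From mathcomp Require Import reals exp.
From mathcomp Require Import zify ring.
Set Implicit Arguments. Unset Strict Implicit. Unset Printing Implicit Defensive.
Import Order.TTheory GRing.Theory Num.Theory.
Local Open Scope ring_scope.

Lemma sumr_expr_lt1_le (R : numFieldType) (x : R) (n : nat) :
  0 <= x < 1 -> \sum_(i < n) x ^+ i <= (1 - x)^-1.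
Proof.
case/andP=> x_ge0 x_lt1; have x1_gt0 : 0 < 1 - x by rewrite subr_gt0.
rewrite -(ler_pM2l x1_gt0) mulrV ?unitf_gt0 //.
have -> : (1 - x) * \sum_(i < n) x ^+ i = 1 - x ^+ n.
  by rewrite -opprB mulNr -subrX1 opprB.
by rewrite gerBl exprn_ge0.
Qed.

Lemma sumr_uniq_expr_le (R : numFieldType) (x : R) (s : seq nat) :
  0 <= x < 1 -> uniq s -> 0%N \notin s -> \sum_(n <- s) x ^+ n <= x / (1 - x).
Proof.
move=> x01 s_uniq s_pos; have /andP[x_ge0 _] := x01.
pose N := \max_(n <- s) n.
have s_sub : s =i [seq n <- iota 1 N | n \in s].
  move=> n; rewrite mem_filter mem_iota; case s_n: (n \in s) => //=.
  rewrite add1n ltnS leq_bigmax_seq // andbT.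
  by case: n s_n; rewrite ?(negbTE s_pos).
rewrite (perm_big _ (uniq_perm s_uniq (filter_uniq _ (iota_uniq _ _)) s_sub)).
rewrite big_filter big_mkcond /=.
apply: (@le_trans _ _ (\sum_(n <- iota 1 N) x ^+ n)).
  by apply: ler_sum => n _; case: ifP => // _; rewrite exprn_ge0.
have -> : iota 1 N = index_iota 1 N.+1 by rewrite /index_iota subn1.
rewrite big_add1 /= big_mkord.
under eq_bigr do rewrite exprS.
by rewrite -mulr_sumr ler_wpM2l // sumr_expr_lt1_le.
Qed.

Lemma ler_sum_cover (R : numDomainType) (I : finType) (A : {pred I})
    (P Q : pred I) (F : I -> R) :
    (forall i, i \in A -> 0 <= F i) -> (forall i, i \in A -> P i || Q i) ->
  \sum_(i in A) F i <= \sum_(i in A | P i) F i + \sum_(i in A | Q i) F i.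
Proof.
move=> F_ge0 PQ_cover; rewrite !big_mkcondr -big_split /=.
apply: ler_sum => i iA; have := PQ_cover i iA.
by case: (P i) (Q i) => [] [] //= _; rewrite ?addr0 ?add0r // lerDl F_ge0.
Qed.

Lemma share_set2 (V : finType) (u v : V) (f : {set V}) :
  share [set u; v] f = (u \in f) || (v \in f).
Proof.
apply/pred0Pn/orP => [[w /andP[/set2P[] -> w_f]]|[u_f|v_f]];
  [by left | by right | |].
- by exists u; rewrite /= set21.
- by exists v; rewrite /= set22.
Qed.

Lemma mem_foldl_greedy_step (V : finType) (M : int -> {set {set V}})
    (ls : seq int) (S : {set {set V}}) (e : {set V}) :
  e \in foldl (greedy_step M) S ls -> e \in S \/ exists l, e \in M l.
Proof.
elim: ls S => [|l ls IH] S /=; first by left.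
move=> /IH [|]; last by right.
by rewrite /greedy_step !inE => /orP[|/andP[e_Ml _]]; [left | right; exists l].
Qed.

Lemma mem_Mhat (V : finType) (Eset : {set {set V}}) (lev : {set V} -> int)
    (M : int -> {set {set V}}) (e : {set V}) :
  e \in Mhat Eset lev M -> exists l, e \in M l.
Proof. by case/mem_foldl_greedy_step; rewrite ?inE. Qed.

Definition lower_nbrs (V : finType) (lev : {set V} -> int)
  (M : int -> {set {set V}}) (e : {set V}) : {set {set V}} :=
  [set f | [&& lev f < lev e, f \in M (lev f) & share e f]].

Lemma Rset_lower_nbrs (V : finType) (lev : {set V} -> int)
    (M : int -> {set {set V}}) (e : {set V}) :
  Rset lev M e = e |: lower_nbrs lev M e.
Proof. by apply/setP => f; rewrite !inE. Qed.

Lemma notin_lower_nbrs (V : finType) (lev : {set V} -> int)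
    (M : int -> {set {set V}}) (e : {set V}) :
  e \notin lower_nbrs lev M e.
Proof. by rewrite inE ltxx. Qed.

Section RoundedWeights.

Variables (R : realType) (V : finType) (alpha r : R) (lev : {set V} -> int).
Hypothesis alpha_gt1 : 1 < alpha.

Local Notation W := (wround alpha r lev).

Lemma wround_gt0 e : 0 < W e.
Proof. by rewrite powR_gt0 // (lt_trans ltr01). Qed.

Lemma wround_lower f e :
  lev f <= lev e -> W f = W e * alpha^-1 ^+ `|lev e - lev f|.
Proof.
move=> le_fe; have alpha_gt0 : 0 < alpha by rewrite (lt_trans ltr01).
rewrite /wround.
have -> : (lev e)%:~R + r = (lev f)%:~R + r + `|lev e - lev f|%:R :> R.
  by rewrite natr_absz ger0_norm ?subr_ge0 // intrB; ring.
rewrite [in RHS]powRD ?(gt_eqF alpha_gt0) ?implybT //.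
rewrite powR_mulrn ?ltW // exprVn mulrK //.
exact/unitf_gt0/exprn_gt0.
Qed.

End RoundedWeights.

Section LowerNeighbours.

Variables (R : realType) (V : finType) (alpha r : R) (lev : {set V} -> int)
  (M : int -> {set {set V}}).
Hypothesis alpha_gt1 : 1 < alpha.
Hypothesis M_matching : forall l, is_matching (M l).

Local Notation W := (wround alpha r lev).
Local Notation S := (lower_nbrs lev M).

Lemma eq_incident_same_level (t : V) (f g : {set V}) :
  f \in M (lev f) -> g \in M (lev g) -> t \in f -> t \in g -> lev f = lev g ->
  f = g.
Proof.
move=> f_M g_M t_f t_g lev_fg; apply/eqP; apply: contraT => ne_fg.
rewrite lev_fg in f_M.
by rewrite (disjointFr (M_matching f_M g_M ne_fg) t_f) in t_g.
Qed.

Lemma sum_lower_nbrs_at_le e t :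
  \sum_(f in S e | t \in f) W f <= W e * (alpha^-1 / (1 - alpha^-1)).
Proof.
pose k f := `|lev e - lev f|%N.
have S_lt f : f \in S e -> lev f < lev e by rewrite inE => /andP[].
rewrite (eq_bigr (fun f => W e * alpha^-1 ^+ k f)); last first.
  move=> f /andP[/S_lt/ltW le_fe _].
  by rewrite (wround_lower r alpha_gt1 le_fe).
rewrite -mulr_sumr ler_wpM2l ?(ltW (wround_gt0 _ _ alpha_gt1 _)) //.
rewrite -big_enum_cond -big_filter -(big_map k xpredT (fun n => alpha^-1 ^+ n)).
apply: sumr_uniq_expr_le.
- have alpha_gt0 : 0 < alpha by rewrite (lt_trans ltr01).
  by rewrite invr_ge0 invf_lt1 // alpha_gt1 ltW.
- rewrite map_inj_in_uniq ?(filter_uniq _ (enum_uniq _)) //.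
  move=> f g; rewrite !mem_filter => /and3P[t_f f_S _] /and3P[t_g g_S _] k_fg.
  move: (f_S) (g_S); rewrite !inE => /and3P[_ f_M _] /and3P[_ g_M _].
  apply: (eq_incident_same_level f_M g_M t_f t_g).
  by move: k_fg (S_lt f f_S) (S_lt g g_S); rewrite /k; lia.
- apply/mapP => -[f]; rewrite mem_filter mem_enum => /andP[_ /S_lt].
  by rewrite /k; lia.
Qed.

Lemma Phi_le_card2 (e : {set V}) : #|e| = 2%N ->
  Phi alpha r lev M e <= (alpha + 1) / (alpha - 1) * W e.
Proof.
move=> /eqP/cards2P[u [v [_ ->]]].
have W_ge0 f : 0 <= W f by exact/ltW/wround_gt0.
have -> : (alpha + 1) / (alpha - 1) * W [set u; v] =
          W [set u; v] + W [set u; v] * (alpha^-1 / (1 - alpha^-1))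
          + W [set u; v] * (alpha^-1 / (1 - alpha^-1)).
  have alpha_neq0 : alpha != 0 by rewrite gt_eqF // (lt_trans ltr01).
  have alpha_neq1 : alpha - 1 != 0 by rewrite subr_eq0 gt_eqF.
  by field; rewrite alpha_neq1 alpha_neq0.
rewrite /Phi Rset_lower_nbrs big_setU1 ?notin_lower_nbrs //= -addrA lerD2l.
apply: le_trans (lerD (sum_lower_nbrs_at_le _ u) (sum_lower_nbrs_at_le _ v)).
apply: ler_sum_cover => [f _ | f]; first exact: W_ge0.
by rewrite inE share_set2 => /and3P[].
Qed.

End LowerNeighbours.

Theorem lemma6 (R : realType) (V : finType) (Eset : {set {set V}})
  (w : {set V} -> R) (alpha r : R) (lev : {set V} -> int)
  (M : int -> {set {set V}}) :
  (forall e, e \in Eset -> #|e| = 2%N) ->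
  (forall e, e \in Eset -> 1 <= w e) ->
  1 < alpha -> 0 <= r -> r < 1 ->
  (forall e, e \in Eset ->
     powR alpha ((lev e)%:~R + r) <= w e < powR alpha ((lev e)%:~R + r + 1)) ->
  (forall l, M l \subset Eset) ->
  (forall l e, e \in M l -> lev e = l) ->
  (forall l, is_matching (M l)) ->
  forall e, e \in Mhat Eset lev M ->
    Phi alpha r lev M e <= (alpha + 1) / (alpha - 1) * wround alpha r lev e.
Proof.
move=> edge_card2 _ alpha_gt1 _ _ _ M_sub _ M_matching e e_Mhat.
have [l e_Ml] := mem_Mhat e_Mhat.
apply: Phi_le_card2 => //; apply: edge_card2.
exact: subsetP (M_sub l) e e_Ml.
Qed.
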